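(* Let $\widetilde M_0(\varepsilon),\widetilde M_1(\varepsilon)$ be two families of diagonalizable linear operators on $\mathbb C^2$ depending on a parameter $\varepsilon>0$. Let $\widetilde\Lambda_i=\operatorname{diag}(\lambda_{i1},\lambda_{i2})$ be the matrix of $\widetilde M_i$ in its eigenbasis, $i=0,1$. Let $C(\varepsilon)$ be the transition matrix between the eigenbases, so that in the eigenbasis of $\widetilde M_0$ the matrix of $\widetilde M_1$ is $C(\varepsilon)\widetilde\Lambda_1C^{-1}(\varepsilon)$. Suppose the eigenbases converge to some bases as $\varepsilon\to0$, and that $C(\varepsilon)$ tends to a unipotent lower-triangular matrix $C_0$. Suppose $$\nu_0=\frac{\lambda_{02}}{\lambda_{01}}\to0,\qquad \nu_1=\frac{\lambda_{11}}{\lambda_{12}}\to0\quad(\varepsilon\to0),$$ and suppose the upper-triangular (i.e. $(1,2)$) entry $u(\varepsilon)$ of $C(\varepsilon)$ satisfies $u(\varepsilon)=o(\nu_0\nu_1)$ as $\varepsilon\to0$. Then the matrix of $\widetilde M_1^{-1}\widetilde M_0\widetilde M_1\widetilde M_0^{-1}$ in the eigenbasis of $\widetilde M_0$ converges to $C_0$ as $\varepsilon\to0$. *)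

From HB Require Import structures.
From mathcomp Require Import all_boot all_order all_algebra.
From mathcomp Require Export complex.
From mathcomp Require Export all_classical all_reals all_analysis.
Export Order.TTheory GRing.Theory Num.Theory.
Export numFieldTopology.Exports numFieldNormedType.Exports.
Set Implicit Arguments. Unset Strict Implicit. Unset Printing Implicit Defensive.
Local Open Scope ring_scope.
Local Open Scope classical_set_scope.

(* The complex numbers R[i] (R a real closed field) are a numClosedFieldType;
   equip them with their standard (norm) topology, as done in
   numFieldTopology for numFieldTypes, so that limits of complex-valued
   functions and of complex matrices ('M[R[i]]_(m,n), product topology)
   make sense. *)
HB.instance Definition _ (R : rcfType) := PseudoPointedMetric.copy R[i] (R[i])^o.

Definition diag2 (K : nzRingType) (a b : K) : 'M[K]_2 :=
  diag_mx (\row_(j < 2) (if j == ord0 then a else b)).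

Definition littleo_0p (R : realType) (u v : R -> R[i]) : Prop :=
  forall e : R, 0 < e -> \forall x \near 0^'+, `|u x| <= (e%:C)%C * `|v x|.

(* In the eigenbasis of M0, and after dividing M0 by l01 and M1 by l12 (which
   does not change the commutator), the two operators become D0 = diag(1, nu0)
   and C D1 C^-1 with D1 = diag(nu1, 1).  Write [A]_n for the conjugate
   diag(1, n) A diag(1, n)^-1, which divides the (1,2) entry of A by n and
   multiplies its (2,1) entry by n.  Then the commutator factors as
     C * [C^-1 [C]_nu0]_nu1 * [C^-1]_nu0.
   As nu0, nu1 -> 0 the last two factors tend to the identity: their (2,1)
   entries get a vanishing factor, their (1,2) entries are, up to bounded
   factors, u/nu0 and u/(nu0 nu1), which vanish because u = o(nu0 nu1), and
   their diagonals tend to the diagonal of C0^-1, which is 1 by unipotence. *)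

From HB Require Import structures.
From mathcomp Require Import all_boot all_order all_algebra.
From mathcomp Require Import complex.
From mathcomp Require Import all_classical all_reals all_analysis.
From mathcomp Require Import ring.
Import Order.TTheory GRing.Theory Num.Theory.
Import numFieldTopology.Exports numFieldNormedType.Exports.
Set Implicit Arguments. Unset Strict Implicit. Unset Printing Implicit Defensive.
Local Open Scope ring_scope.
Local Open Scope classical_set_scope.

Section MatrixCommutator.
Variables (K : comUnitRingType) (n : nat).
Implicit Types A B C D E P : 'M[K]_n.

Definition mxcomm A B := invmx A *m B *m A *m invmx B.

Lemma mulmx1_eq A B : A *m B = 1%:M -> invmx A = B.
Proof.
move=> AB; have [uA _] := mulmx1_unit AB.
by rewrite -[invmx A]mulmx1 -AB mulKmx.
Qed.

Lemma invmx_conj P A : P \in unitmx ->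
  invmx (invmx P *m A *m P) = invmx P *m invmx A *m P.
Proof.
move=> uP; have [uA | nuA] := boolP (A \in unitmx).
  apply: mulmx1_eq.
  by rewrite !mulmxA (mulmxK uP) (mulmxK uA) (mulVmx uP).
rewrite (invmx_out nuA) [LHS]invmx_out // inE /= !unitmx_mul unitmx_inv uP.
by rewrite (negbTE nuA).
Qed.

Lemma invmxM A B : A \in unitmx -> B \in unitmx ->
  invmx (A *m B) = invmx B *m invmx A.
Proof.
move=> uA uB; apply: mulmx1_eq.
by rewrite !mulmxA (mulmxK uB) (mulmxV uA).
Qed.

Lemma mxcomm_conj P A B : P \in unitmx ->
  invmx P *m mxcomm A B *m P = mxcomm (invmx P *m A *m P) (invmx P *m B *m P).
Proof.
move=> uP; rewrite /mxcomm !invmx_conj //.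
by rewrite !mulmxA !(mulmxK uP).
Qed.

Lemma mxcommZ (a b : K) A B : a \is a GRing.unit -> b \is a GRing.unit ->
  A \in unitmx -> B \in unitmx -> mxcomm (a *: A) (b *: B) = mxcomm A B.
Proof.
move=> ua ub uA uB; rewrite /mxcomm !invmxZ ?unitmxZ //.
rewrite -!scalemxAl -!scalemxAr -!scalemxAl !scalerA.
by rewrite -[b^-1 * a * b]mulrA mulrCA mulKr // mulVr // scale1r.
Qed.

Lemma mxcomm_factor C D E : C \in unitmx -> D \in unitmx ->
  D *m E = E *m D ->
  mxcomm (C *m E *m invmx C) D =
  C *m (invmx E *m (invmx C *m (D *m C *m invmx D)) *m E) *m (D *m invmx C *m invmx D).
Proof.
move=> uC uD DE.
have DiE : invmx D *m E = E *m invmx D.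
  by apply: (canRL (mulmxK uD)); rewrite -mulmxA -DE mulmxA mulVmx ?mul1mx.
rewrite -[in C *m E](invmxK C) /mxcomm invmx_conj ?unitmx_inv // invmxK.
by rewrite !mulmxA -(mulmxA _ (invmx D) E) DiE mulmxA (mulmxKV uD).
Qed.
End MatrixCommutator.

Section TwoByTwo.
Variable K : comNzRingType.
Implicit Types (a b c d : K) (A B : 'M[K]_2).

Definition mx2 a b c d : 'M[K]_2 :=
  \matrix_(i, j) if i == ord0 then if j == ord0 then a else b
                 else if j == ord0 then c else d.

Lemma ord2P (i : 'I_2) : i = ord0 \/ i = ord_max.
Proof. by case: i => [[|[|//]]] ?; [left | right]; exact: val_inj. Qed.

Lemma mx2_eta A :
  A = mx2 (A ord0 ord0) (A ord0 ord_max) (A ord_max ord0) (A ord_max ord_max).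
Proof.
by apply/matrixP => i j; rewrite mxE; case: (ord2P i) (ord2P j) => -> [] ->.
Qed.

Lemma mulmx2E A B i j :
  (A *m B) i j = A i ord0 * B ord0 j + A i ord_max * B ord_max j.
Proof.
rewrite mxE !big_ord_recl big_ord0 addr0.
by have -> : lift ord0 ord0 = ord_max :> 'I_2 by exact: val_inj.
Qed.

Lemma mulmx2 a b c d a' b' c' d' :
  mx2 a b c d *m mx2 a' b' c' d' =
  mx2 (a * a' + b * c') (a * b' + b * d') (c * a' + d * c') (c * b' + d * d').
Proof.
by apply/matrixP => i j; rewrite mulmx2E !mxE; case: (ord2P i) (ord2P j) => -> [] ->.
Qed.

Lemma scalemx2 k a b c d : k *: mx2 a b c d = mx2 (k * a) (k * b) (k * c) (k * d).
Proof.
by apply/matrixP => i j; rewrite !mxE; case: (ord2P i) (ord2P j) => -> [] ->.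
Qed.

Lemma mx2_1 : 1%:M = mx2 1 0 0 1.
Proof.
by apply/matrixP => i j; rewrite !mxE; case: (ord2P i) (ord2P j) => -> [] ->.
Qed.

Lemma diag2E a b : diag2 a b = mx2 a 0 0 b.
Proof.
apply/matrixP => i j; rewrite !mxE.
by case: (ord2P i) (ord2P j) => -> [] -> /=; rewrite ?mxE ?mulr1n ?mulr0n.
Qed.

Lemma det_mx2 a b c d : \det (mx2 a b c d) = a * d - b * c.
Proof.
rewrite (expand_det_row _ ord0) !big_ord_recl big_ord0 /cofactor !det_mx11 !mxE.
by rewrite /= /bump /=; ring.
Qed.

Lemma diag2_comm a b c d : diag2 a b *m diag2 c d = diag2 c d *m diag2 a b.
Proof. by rewrite !diag2E !mulmx2; congr mx2; ring. Qed.
End TwoByTwo.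

Section TwoByTwoField.
Variable K : fieldType.
Implicit Types (a b n : K) (A C : 'M[K]_2).

Lemma invmx2 A : \det A != 0 ->
  invmx A = (\det A)^-1 *:
    mx2 (A ord_max ord_max) (- A ord0 ord_max) (- A ord_max ord0) (A ord0 ord0).
Proof.
move=> detA; apply: mulmx1_eq; move: detA.
rewrite -scalemxAr {1 2 3}[A]mx2_eta det_mx2 mulmx2 scalemx2 mx2_1 => detA.
by congr mx2; field.
Qed.

Lemma unitmx_diag2 a b : a != 0 -> b != 0 -> diag2 a b \in unitmx.
Proof. by move=> a0 b0; rewrite unitmxE diag2E det_mx2 mulr0 subr0 unitfE mulf_neq0. Qed.

Lemma invmx_diag2 a b : a != 0 -> b != 0 -> invmx (diag2 a b) = diag2 a^-1 b^-1.
Proof.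
move=> a0 b0; apply: mulmx1_eq.
by rewrite !diag2E mulmx2 mx2_1 !mulr0 !mul0r !addr0 !add0r (mulfV a0) (mulfV b0).
Qed.

Definition diag_conj n A :=
  mx2 (A ord0 ord0) (A ord0 ord_max / n) (n * A ord_max ord0) (A ord_max ord_max).

Lemma diag_conj_1n n A : n != 0 ->
  diag2 1 n *m A *m invmx (diag2 1 n) = diag_conj n A.
Proof.
move=> n0; rewrite invmx_diag2 ?oner_neq0 // invr1 !diag2E [in LHS](mx2_eta A).
by rewrite !mulmx2 /diag_conj; congr mx2; field.
Qed.

Lemma diag_conj_n1 n A : n != 0 ->
  invmx (diag2 n 1) *m A *m diag2 n 1 = diag_conj n A.
Proof.
move=> n0; rewrite invmx_diag2 ?oner_neq0 // invr1 !diag2E [in LHS](mx2_eta A).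
by rewrite !mulmx2 /diag_conj; congr mx2; field.
Qed.

Lemma mxcomm_diag2 C n0 n1 : C \in unitmx -> n0 != 0 -> n1 != 0 ->
  mxcomm (C *m diag2 n1 1 *m invmx C) (diag2 1 n0) =
  C *m diag_conj n1 (invmx C *m diag_conj n0 C) *m diag_conj n0 (invmx C).
Proof.
move=> uC n0_neq0 n1_neq0.
rewrite mxcomm_factor ?unitmx_diag2 ?oner_neq0 //; last exact: diag2_comm.
by rewrite !diag_conj_1n // diag_conj_n1.
Qed.

Lemma invmx_diag_conj_01 C n : C \in unitmx ->
  (invmx C *m diag_conj n C) ord0 ord_max =
  invmx C ord0 ord0 * C ord0 ord_max * (n^-1 - 1).
Proof.
move=> uC; have : (invmx C *m C) ord0 ord_max = 0 by rewrite mulVmx // mxE.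
rewrite !mulmx2E !mxE /= => /eqP; rewrite addrC addr_eq0 => /eqP ->.
by ring.
Qed.

Definition unipotent_lower A :=
  [/\ A ord0 ord0 = 1, A ord_max ord_max = 1 & A ord0 ord_max = 0].

Lemma det_unipotent A : unipotent_lower A -> \det A = 1.
Proof. by case=> a00 a11 a01; rewrite [A]mx2_eta det_mx2 a00 a11 a01 mul0r subr0 mulr1. Qed.

Lemma invmx_unipotent A : unipotent_lower A ->
  invmx A = mx2 1 0 (- A ord_max ord0) 1.
Proof.
move=> uniA; have [a00 a11 a01] := uniA.
rewrite invmx2 det_unipotent ?oner_neq0 // invr1 scale1r.
by rewrite a00 a11 a01 oppr0.
Qed.

Lemma mxcomm_eigenbases (P0 P1 : 'M[K]_2) a0 b0 a1 b1 :
  P0 \in unitmx -> P1 \in unitmx ->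
  a0 != 0 -> b0 != 0 -> a1 != 0 -> b1 != 0 ->
  invmx P0 *m mxcomm (P1 *m diag2 a1 b1 *m invmx P1) (P0 *m diag2 a0 b0 *m invmx P0) *m P0 =
  mxcomm (invmx P0 *m P1 *m diag2 (a1 / b1) 1 *m invmx (invmx P0 *m P1))
         (diag2 1 (b0 / a0)).
Proof.
move=> uP0 uP1 a0_neq0 b0_neq0 a1_neq0 b1_neq0.
have -> : diag2 a0 b0 = a0 *: diag2 1 (b0 / a0).
  by rewrite !diag2E scalemx2; congr mx2; field.
have -> : diag2 a1 b1 = b1 *: diag2 (a1 / b1) 1.
  by rewrite !diag2E scalemx2; congr mx2; field.
have uconj P a b : P \in unitmx -> a != 0 -> b != 0 -> P *m diag2 a b *m invmx P \in unitmx.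
  by move=> uP ? ?; rewrite !unitmx_mul unitmx_inv uP unitmx_diag2.
rewrite -!scalemxAr -!scalemxAl mxcommZ ?unitfE ?uconj ?mulf_neq0 ?invr_neq0 ?oner_neq0 //.
rewrite mxcomm_conj // invmxM ?unitmx_inv // invmxK.
by rewrite !mulmxA (mulVmx uP0) mul1mx (mulmxKV uP0).
Qed.
End TwoByTwoField.

Section Limits.
Variables (K : numFieldType) (T : Type) (F : set_system T).
Hypothesis FF : Filter F.

Lemma cvg_mxP m n (f : T -> 'M[K]_(m, n)) (A : 'M[K]_(m, n)) :
  f @ F --> A <-> forall i j, f x i j @[x --> F] --> A i j.
Proof.
split=> [fA i j | fAij].
  exact: (cvg_comp f (fun B => B i j) fA (@coord_continuous K m n i j A)).
apply/cvg_ballP => e e0.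
have fAi i : \forall x \near F, forall j, ball (A i j) e (f x i j).
  by apply: filter_forall => j; exact: (cvg_ballP _ _).1 (fAij i j) e e0.
by apply: filterS (filter_forall _ fAi) => x fAx; split.
Qed.

Lemma cvg_mulmx m n p (f : T -> 'M[K]_(m, n)) (g : T -> 'M[K]_(n, p))
    (A : 'M[K]_(m, n)) (B : 'M[K]_(n, p)) :
  f @ F --> A -> g @ F --> B -> f x *m g x @[x --> F] --> A *m B.
Proof.
move=> /cvg_mxP fA /cvg_mxP gB; apply/cvg_mxP => i j.
rewrite mxE; under eq_cvg do rewrite mxE.
apply: cvg_big => [|k _]; first exact: add_continuous.
exact: cvgM.
Qed.

Lemma cvg_mx2 (a b c d : T -> K) (a0 b0 c0 d0 : K) :
  a @ F --> a0 -> b @ F --> b0 -> c @ F --> c0 -> d @ F --> d0 ->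
  mx2 (a x) (b x) (c x) (d x) @[x --> F] --> mx2 a0 b0 c0 d0.
Proof.
move=> ha hb hc hd; apply/cvg_mxP => i j; rewrite mxE.
by under eq_cvg do rewrite mxE; case: (ord2P i) (ord2P j) => -> [] ->.
Qed.

Lemma cvg_det2 (f : T -> 'M[K]_2) (A : 'M[K]_2) :
  f @ F --> A -> \det (f x) @[x --> F] --> \det A.
Proof.
move/cvg_mxP => fA; rewrite [A]mx2_eta det_mx2.
under eq_cvg do rewrite [f _]mx2_eta det_mx2.
by apply: cvgB; apply: cvgM.
Qed.

Lemma cvg_invmx2 (f : T -> 'M[K]_2) (A : 'M[K]_2) : A \in unitmx ->
  f @ F --> A -> invmx (f x) @[x --> F] --> invmx A.
Proof.
rewrite unitmxE unitfE => detA fA.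
have invf : \forall x \near F, (\det (f x))^-1 *: mx2 (f x ord_max ord_max)
    (- f x ord0 ord_max) (- f x ord_max ord0) (f x ord0 ord0) = invmx (f x).
  by apply: filterS (cvgr_neq0 _ (cvg_det2 fA) detA) => x /invmx2->.
apply: cvg_trans (near_eq_cvg invf) _.
rewrite invmx2 //; apply: cvgZ; first exact: cvgV (cvg_det2 fA).
by move/cvg_mxP: fA => fA; apply: cvg_mx2; rewrite ?cvgNP.
Qed.

Lemma cvg_diag_conj (n : T -> K) (f : T -> 'M[K]_2) (A : 'M[K]_2) :
  n @ F --> 0 -> f @ F --> A -> f x ord0 ord_max / n x @[x --> F] --> 0 ->
  diag_conj (n x) (f x) @[x --> F] --> mx2 (A ord0 ord0) 0 0 (A ord_max ord_max).
Proof.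
move=> n0 /cvg_mxP fA f01; apply: cvg_mx2 => //.
by rewrite -(mul0r (A ord_max ord0)); apply: cvgM.
Qed.

Lemma cvg_div_mulr0 (a b c : T -> K) : (\forall x \near F, c x != 0) ->
  c @ F --> 0 -> a x / (b x * c x) @[x --> F] --> 0 -> a x / b x @[x --> F] --> 0.
Proof.
move=> c_neq0 c0 abc0.
have eq_ab : \forall x \near F, a x / (b x * c x) * c x = a x / b x.
  by apply: filterS c_neq0 => x cx; rewrite invfM mulrA mulfVK.
by apply: cvg_trans (near_eq_cvg eq_ab) _; rewrite -(mul0r 0); apply: cvgM.
Qed.

Section UnipotentLimit.
Variables (C : T -> 'M[K]_2) (C0 : 'M[K]_2) (n0 n1 : T -> K).
Hypotheses (uniC0 : unipotent_lower C0) (hC : C @ F --> C0).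
Hypotheses (hn0 : n0 @ F --> 0) (hn1 : n1 @ F --> 0).
Hypothesis near_nz : \forall x \near F, [/\ C x \in unitmx, n0 x != 0 & n1 x != 0].
Hypothesis hu : C x ord0 ord_max / (n0 x * n1 x) @[x --> F] --> 0.

Let uC0 : C0 \in unitmx.
Proof. by rewrite unitmxE det_unipotent ?unitr1. Qed.

Let diag_invC0 : mx2 (invmx C0 ord0 ord0) 0 0 (invmx C0 ord_max ord_max) = 1%:M.
Proof. by rewrite invmx_unipotent // !mxE /= mx2_1. Qed.

Let hu0 : C x ord0 ord_max / n0 x @[x --> F] --> 0.
Proof. by apply: cvg_div_mulr0 hn1 hu; apply: filterS near_nz => x []. Qed.

Lemma cvg_diag_conj_invmx : diag_conj (n0 x) (invmx (C x)) @[x --> F] --> (1%:M : 'M[K]_2).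
Proof.
have eq_entry : \forall x \near F,
    - (\det (C x))^-1 * (C x ord0 ord_max / n0 x) = invmx (C x) ord0 ord_max / n0 x.
  apply: filterS near_nz => x [uC _ _].
  by rewrite invmx2 -?unitfE -?unitmxE // !mxE /=; ring.
rewrite -diag_invC0; apply: cvg_diag_conj hn0 (cvg_invmx2 uC0 hC) _.
apply: cvg_trans (near_eq_cvg eq_entry) _.
rewrite -(mulr0 (- 1)) -invr1 -(det_unipotent uniC0).
by apply: cvgM hu0; apply: cvgN; apply: cvgV (cvg_det2 hC); rewrite det_unipotent ?oner_neq0.
Qed.

Lemma cvg_diag_conj_invmx_mul :
  diag_conj (n1 x) (invmx (C x) *m diag_conj (n0 x) (C x)) @[x --> F] --> (1%:M : 'M[K]_2).
Proof.
have hiC := cvg_invmx2 uC0 hC.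
have eq_entry : \forall x \near F,
    invmx (C x) ord0 ord0 * (C x ord0 ord_max / (n0 x * n1 x)) * (1 - n0 x) =
    (invmx (C x) *m diag_conj (n0 x) (C x)) ord0 ord_max / n1 x.
  apply: filterS near_nz => x [uC n0x n1x].
  by rewrite invmx_diag_conj_01 //; field; rewrite n0x n1x.
have [c00 c11 _] := uniC0.
have hCC : invmx (C x) *m diag_conj (n0 x) (C x) @[x --> F] --> invmx C0.
  rewrite -[invmx C0]mulmx1 mx2_1 -[X in mx2 X]c00 -[X in mx2 _ _ _ X]c11.
  exact: cvg_mulmx hiC (cvg_diag_conj hn0 hC hu0).
rewrite -diag_invC0; apply: cvg_diag_conj hn1 hCC _.
apply: cvg_trans (near_eq_cvg eq_entry) _.
have -> : 0 = invmx C0 ord0 ord0 * 0 * (1 - 0) :> K by rewrite mulr0 mul0r.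
apply: cvgM; last exact: cvgB (cvg_cst _) hn0.
by apply: cvgM hu; move/cvg_mxP: hiC.
Qed.
End UnipotentLimit.

Lemma cvg_mxcomm_diag2 (C : T -> 'M[K]_2) (C0 : 'M[K]_2) (n0 n1 : T -> K) :
  unipotent_lower C0 -> C @ F --> C0 -> n0 @ F --> 0 -> n1 @ F --> 0 ->
  (\forall x \near F, [/\ C x \in unitmx, n0 x != 0 & n1 x != 0]) ->
  C x ord0 ord_max / (n0 x * n1 x) @[x --> F] --> 0 ->
  mxcomm (C x *m diag2 (n1 x) 1 *m invmx (C x)) (diag2 1 (n0 x)) @[x --> F] --> C0.
Proof.
move=> uniC0 hC hn0 hn1 near_nz hu.
have eq_comm : \forall x \near F,
    C x *m diag_conj (n1 x) (invmx (C x) *m diag_conj (n0 x) (C x))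
      *m diag_conj (n0 x) (invmx (C x)) =
    mxcomm (C x *m diag2 (n1 x) 1 *m invmx (C x)) (diag2 1 (n0 x)).
  by apply: filterS (near_nz) => x [uC n0x n1x]; rewrite mxcomm_diag2.
apply: cvg_trans (near_eq_cvg eq_comm) _.
rewrite -[C0]mulmx1 -[C0 *m 1%:M]mulmx1; apply: cvg_mulmx.
  exact: cvg_mulmx hC (cvg_diag_conj_invmx_mul uniC0 hC hn0 hn1 near_nz hu).
exact: cvg_diag_conj_invmx uniC0 hC hn0 hn1 near_nz hu.
Qed.
End Limits.
Lemma littleo_0p_cvg0 (R : realType) (u v : R -> R[i]) :
  littleo_0p u v -> (\forall x \near 0^'+, v x != 0) ->
  u x / v x @[x --> 0^'+] --> (0 : R[i]).
Proof.
move=> uv v_neq0; apply: (proj2 (@cvgr0Pnorm_le _ (R[i])^o _ _ _ _)) => e e_gt0.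
have Re_gt0 : 0 < complex.Re e by move: e_gt0; rewrite ltcE => /andP[_].
near=> x; rewrite normf_div ler_pdivrMr ?normr_gt0; last by near: x.
by rewrite -[e in e * _](RRe_real (gtr0_real e_gt0)); near: x; exact: uv.
Unshelve. all: by end_near.
Qed.

Unset Implicit Arguments.

Theorem lemma3p5 (R : realType)
  (M0 M1 P0 P1 : R -> 'M[R[i]]_2) (l01 l02 l11 l12 : R -> R[i])
  (B0 B1 C0 : 'M[R[i]]_2)
  (* P_i(eps): invertible matrix whose columns form an eigenbasis of M_i(eps) *)
  (hP0 : forall eps, 0 < eps -> P0 eps \in unitmx)
  (hP1 : forall eps, 0 < eps -> P1 eps \in unitmx)
  (* eigenvalues are nonzero (the operators are invertible) *)
  (hl : forall eps, 0 < eps ->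
     [/\ l01 eps != 0, l02 eps != 0, l11 eps != 0 & l12 eps != 0])
  (hM0 : forall eps, 0 < eps ->
     M0 eps = P0 eps *m diag2 (l01 eps) (l02 eps) *m invmx (P0 eps))
  (hM1 : forall eps, 0 < eps ->
     M1 eps = P1 eps *m diag2 (l11 eps) (l12 eps) *m invmx (P1 eps))
  (* the eigenbases converge to bases *)
  (hB0 : P0 x @[x --> 0^'+] --> B0) (hB0u : B0 \in unitmx)
  (hB1 : P1 x @[x --> 0^'+] --> B1) (hB1u : B1 \in unitmx)
  (* transition matrix C(eps) = P0^-1 P1 tends to unipotent lower-triangular C0 *)
  (hC : (invmx (P0 x) *m P1 x) @[x --> 0^'+] --> C0)
  (hC0 : [/\ C0 ord0 ord0 = 1, C0 ord_max ord_max = 1 & C0 ord0 ord_max = 0])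
  (* nu0 = l02/l01 -> 0, nu1 = l11/l12 -> 0 *)
  (hnu0 : (l02 x / l01 x) @[x --> 0^'+] --> (0 : R[i]))
  (hnu1 : (l11 x / l12 x) @[x --> 0^'+] --> (0 : R[i]))
  (* u = C_{12} = o(nu0 nu1) *)
  (hu : littleo_0p (fun x => (invmx (P0 x) *m P1 x) ord0 ord_max)
                   (fun x => (l02 x / l01 x) * (l11 x / l12 x))) :
  (invmx (P0 x) *m (invmx (M1 x) *m M0 x *m M1 x *m invmx (M0 x)) *m P0 x)
    @[x --> 0^'+] --> C0.
Proof.
(* Only the limit of the transition matrix matters. *)
pose C x := invmx (P0 x) *m P1 x.
have near_nz : \forall x \near 0^'+,
    [/\ C x \in unitmx, l02 x / l01 x != 0 & l11 x / l12 x != 0].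
  apply: filterS (nbhs_right_gt 0) => x /[dup] x_gt0 /hl[? ? ? ?].
  by rewrite unitmx_mul unitmx_inv hP0 ?hP1 // !mulf_neq0 ?invr_neq0.
have eq_comm : \forall x \near 0^'+,
    mxcomm (C x *m diag2 (l11 x / l12 x) 1 *m invmx (C x)) (diag2 1 (l02 x / l01 x)) =
    invmx (P0 x) *m mxcomm (M1 x) (M0 x) *m P0 x.
  apply: filterS (nbhs_right_gt 0) => x /[dup] x_gt0 /hl[? ? ? ?].
  by rewrite (hM0 x x_gt0) (hM1 x x_gt0) mxcomm_eigenbases ?hP0 ?hP1.
apply: cvg_trans (near_eq_cvg eq_comm) _.
apply: cvg_mxcomm_diag2 hC0 hC hnu0 hnu1 (near_nz) _.
apply: littleo_0p_cvg0 hu _.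
by apply: filterS (near_nz) => x [_ ? ?]; rewrite mulf_neq0.
Qed.
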